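(* Let $k:X\to Y$ be a homotopy equivalence and $x\in X$. If $Y$ is transfinitely $\pi_1$-commutative at $k(x)$, then $X$ is transfinitely $\pi_1$-commutative at $x$. In particular, if $f:(X,x)\to(Y,y)$ is a based homotopy equivalence, then $X$ is transfinitely $\pi_1$-commutative at $x$ if and only if $Y$ is transfinitely $\pi_1$-commutative at $y$.
   Context: Let $\mathbb{H}=\bigcup_nC_n$ be the Hawaiian earring ($C_n\subset\mathbb{R}^2$ the circle of radius $1/n$ centered at $(1/n,0)$, basepoint $b_0=(0,0)$), $\ell_n$ the counterclockwise loop on $C_n$. A sequence of loops $\alpha_n\in\Omega(X,x)$ is a null-sequence if every neighborhood of $x$ contains all but finitely many $\mathrm{Im}(\alpha_n)$; then there is a unique map $f:(\mathbb{H},b_0)\to(X,x)$ with $f\circ\ell_n=\alpha_n$. With $\mathcal{C}\subseteq[0,1]$ the middle-thirds Cantor set and $[0,1]\setminus\mathcal{C}=\bigcup_{n\ge1}\bigcup_{k=1}^{2^{n-1}}I_n^k$ (open intervals of length $3^{-n}$, indexed left to right for fixed $n$), $\ell_\tau$ is the loop with $\ell_\tau(\mathcal{C})=b_0$ equal to $\ell_{2^{n-1}+k-1}$ (linearly reparametrized) on $\overline{I_n^k}$, and $\prod_\tau\alpha_n:=f\circ\ell_\tau$. $X$ is transfinitely $\pi_1$-commutative at $x$ if $[\prod_\tau\alpha_n]=[\prod_\tau\alpha_{\phi(n)}]$ in $\pi_1(X,x)$ for every null-sequence $\alpha_n\in\Omega(X,x)$ and every bijection $\phi:\mathbb{N}\to\mathbb{N}$.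 *)

From Stdlib Require Import Reals Lra Arith.
Open Scope R_scope.

Record TopSpace := {
  carrier :> Type;
  is_open : (carrier -> Prop) -> Prop;
  open_full : is_open (fun _ => True);
  open_inter : forall U V, is_open U -> is_open V -> is_open (fun z => U z /\ V z);
  open_union : forall F : (carrier -> Prop) -> Prop,
      (forall U, F U -> is_open U) -> is_open (fun z => exists U, F U /\ U z)
}.

Definition in01 (t : R) : Prop := 0 <= t <= 1.

Definition continuous {X Y : TopSpace} (f : X -> Y) : Prop :=
  forall V : Y -> Prop, is_open Y V -> is_open X (fun z => V (f z)).

Definition cont_X01 {X Y : TopSpace} (H : X -> R -> Y) : Prop :=
  forall (z : X) (t : R), in01 t -> forall V : Y -> Prop, is_open Y V -> V (H z t) ->
    exists U : X -> Prop, is_open X U /\ U z /\ exists d, d > 0 /\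
      forall z' t', U z' -> in01 t' -> Rabs (t' - t) < d -> V (H z' t').

Definition homotopic {X Y : TopSpace} (f g : X -> Y) : Prop :=
  exists H : X -> R -> Y, cont_X01 H /\
    (forall z, H z 0 = f z) /\ (forall z, H z 1 = g z).

Definition based_homotopic {X Y : TopSpace} (x0 : X) (f g : X -> Y) : Prop :=
  exists H : X -> R -> Y, cont_X01 H /\
    (forall z, H z 0 = f z) /\ (forall z, H z 1 = g z) /\
    (forall t, in01 t -> H x0 t = f x0).

Definition homotopy_equivalence {X Y : TopSpace} (k : X -> Y) : Prop :=
  continuous k /\ exists g : Y -> X, continuous g /\
    homotopic (fun z => g (k z)) (fun z => z) /\
    homotopic (fun w => k (g w)) (fun w => w).

Definition based_homotopy_equivalence {X Y : TopSpace} (f : X -> Y) (x : X) (y : Y) : Prop :=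
  continuous f /\ f x = y /\ exists g : Y -> X, continuous g /\ g y = x /\
    based_homotopic x (fun z => g (f z)) (fun z => z) /\
    based_homotopic y (fun w => f (g w)) (fun w => w).

(** Paths are functions R -> X; only their values on [0,1] matter. *)
Definition path_continuous {X : TopSpace} (p : R -> X) : Prop :=
  forall t, in01 t -> forall V : X -> Prop, is_open X V -> V (p t) ->
    exists d, d > 0 /\ forall s, in01 s -> Rabs (s - t) < d -> V (p s).

Definition is_loop {X : TopSpace} (x : X) (p : R -> X) : Prop :=
  path_continuous p /\ p 0 = x /\ p 1 = x.

(** [p] = [q] in pi_1(X,x): homotopy rel endpoints between loops at x. *)
Definition loop_homotopic {X : TopSpace} (x : X) (p q : R -> X) : Prop :=
  exists H : R -> R -> X,
    (forall s t, in01 s -> in01 t -> forall V : X -> Prop, is_open X V -> V (H s t) ->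
       exists d, d > 0 /\ forall s' t', in01 s' -> in01 t' ->
         Rabs (s' - s) < d -> Rabs (t' - t) < d -> V (H s' t')) /\
    (forall t, in01 t -> H 0 t = p t) /\
    (forall t, in01 t -> H 1 t = q t) /\
    (forall s, in01 s -> H s 0 = x /\ H s 1 = x).

(** Null-sequence of loops at x (indexed from 0: alpha 0 is the paper's alpha_1). *)
Definition null_sequence {X : TopSpace} (x : X) (alpha : nat -> R -> X) : Prop :=
  (forall n, is_loop x (alpha n)) /\
  forall U : X -> Prop, is_open X U -> U x ->
    exists N, forall n, (N <= n)%nat -> forall t, in01 t -> U (alpha n t).

(** Left endpoint of the Cantor gap I_{m+1}^{j+1} (level m+1, j-th from the left,
    0 <= j < 2^m); the gap is the open interval (gapL m j, gapL m j + 3^-(m+1)). *)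
Fixpoint gapL (m j : nat) : R :=
  match m with
  | O => 1 / 3
  | S m' => if Nat.ltb j (2 ^ m') then gapL m' j / 3
            else 2 / 3 + gapL m' (j - 2 ^ m') / 3
  end.

Definition gapLen (m : nat) : R := / 3 ^ (S m).

Definition in_cantor (t : R) : Prop :=
  in01 t /\ forall m j, (j < 2 ^ m)%nat -> ~ (gapL m j < t < gapL m j + gapLen m).

(** p is (on [0,1]) the transfinite product prod_tau alpha_n = f o l_tau:
    constant x on the Cantor set, and on the closure of I_{m+1}^{j+1} equal to
    the loop with paper index 2^m + j + 1 - 1 (0-based index 2^m + j - 1),
    linearly reparametrized. *)
Definition tau_product {X : TopSpace} (x : X) (alpha : nat -> R -> X) (p : R -> X) : Prop :=
  (forall t, in_cantor t -> p t = x) /\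
  (forall m j t, (j < 2 ^ m)%nat -> gapL m j <= t <= gapL m j + gapLen m ->
     p t = alpha (2 ^ m + j - 1)%nat ((t - gapL m j) / gapLen m)).

Definition bijection (phi : nat -> nat) : Prop :=
  (forall a b, phi a = phi b -> a = b) /\ (forall b, exists a, phi a = b).

Definition transfinitely_commutative (X : TopSpace) (x : X) : Prop :=
  forall alpha : nat -> R -> X, null_sequence x alpha ->
  forall phi : nat -> nat, bijection phi ->
  forall p q : R -> X,
    tau_product x alpha p -> tau_product x (fun n => alpha (phi n)) q ->
    loop_homotopic x p q.

(* Push a null sequence [alpha] at [x] forward along [k]: the images of the two transfinite
   products [p] and [q] are transfinite products of [k o alpha] and of its rearrangement, so
   [k o p] and [k o q] are homotopic rel endpoints, and applying a homotopy inverse [g] gives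
   [g k p ~ g k q].  A homotopy [H : g k ~ id] drags every loop [r] at [x] to the conjugate
   [gamma^-1 (g k r) gamma], where [gamma] is the track of [x] under [H], and conjugation
   preserves homotopy classes; hence [p ~ gamma^-1 (g k p) gamma ~ gamma^-1 (g k q) gamma ~ q].
   The analytic input is that a transfinite product of a null sequence is continuous: near a
   point of the Cantor set, all but finitely many gaps carry loops inside any neighbourhood
   of [x].  A based homotopy equivalence is a homotopy equivalence in both directions. *)

From Stdlib Require Import Reals Lra Lia Classical.
Open Scope R_scope.

Ltac destruct_Rabs := unfold Rabs in *; repeat match goal with
  | |- context [Rcase_abs ?r] => destruct (Rcase_abs r)
  | H : context [Rcase_abs ?r] |- _ => destruct (Rcase_abs r)
  end.

(* Innermost tests first, so that every branch is a plain linear case. *)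
Ltac destruct_Rle_dec := repeat (match goal with |- context [Rle_dec ?a ?b] =>
  lazymatch a with context [Rle_dec _ _] => fail | _ =>
  lazymatch b with context [Rle_dec _ _] => fail | _ =>
  destruct (Rle_dec a b) end end end; cbv iota).

Lemma Rmax_lipschitz a b a' b' :
  Rabs (Rmax a' b' - Rmax a b) <= Rabs (a' - a) + Rabs (b' - b).
Proof. unfold Rmax; destruct (Rle_dec a' b'), (Rle_dec a b); destruct_Rabs; lra. Qed.

Lemma Rmin_lipschitz a b a' b' :
  Rabs (Rmin a' b' - Rmin a b) <= Rabs (a' - a) + Rabs (b' - b).
Proof. unfold Rmin; destruct (Rle_dec a' b'), (Rle_dec a b); destruct_Rabs; lra. Qed.

Definition lipschitz2 (f : R -> R -> R) : Prop :=
  exists L, 0 < L /\ forall s t s' t',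
    Rabs (f s' t' - f s t) <= L * (Rabs (s' - s) + Rabs (t' - t)).

Lemma lipschitz2_const c : lipschitz2 (fun _ _ => c).
Proof.
  exists 1; split; [lra|]; intros s t s' t'.
  rewrite Rminus_diag, Rabs_R0.
  pose proof (Rabs_pos (s' - s)); pose proof (Rabs_pos (t' - t)); lra.
Qed.

Lemma lipschitz2_fst : lipschitz2 (fun s _ => s).
Proof. exists 1; split; [lra|]; intros s t s' t'. pose proof (Rabs_pos (t' - t)); lra. Qed.

Lemma lipschitz2_snd : lipschitz2 (fun _ t => t).
Proof. exists 1; split; [lra|]; intros s t s' t'. pose proof (Rabs_pos (s' - s)); lra. Qed.

Lemma lipschitz2_plus f g :
  lipschitz2 f -> lipschitz2 g -> lipschitz2 (fun s t => f s t + g s t).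
Proof.
  intros [L1 [HL1 Hf]] [L2 [HL2 Hg]]; exists (L1 + L2); split; [lra|]; intros s t s' t'.
  specialize (Hf s t s' t'); specialize (Hg s t s' t').
  replace (f s' t' + g s' t' - (f s t + g s t))
    with ((f s' t' - f s t) + (g s' t' - g s t)) by ring.
  eapply Rle_trans; [apply Rabs_triang|]; nra.
Qed.

Lemma lipschitz2_scal c f : lipschitz2 f -> lipschitz2 (fun s t => c * f s t).
Proof.
  intros [L [HL Hf]]; exists ((Rabs c + 1) * L); split.
  { pose proof (Rabs_pos c); nra. }
  intros s t s' t'; specialize (Hf s t s' t').
  replace (c * f s' t' - c * f s t) with (c * (f s' t' - f s t)) by ring.
  rewrite Rabs_mult.
  pose proof (Rabs_pos c); pose proof (Rabs_pos (f s' t' - f s t));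
  pose proof (Rabs_pos (s' - s)); pose proof (Rabs_pos (t' - t)); nra.
Qed.

Lemma lipschitz2_minus f g :
  lipschitz2 f -> lipschitz2 g -> lipschitz2 (fun s t => f s t - g s t).
Proof.
  intros Hf Hg.
  destruct (lipschitz2_plus _ _ Hf (lipschitz2_scal (-1) _ Hg)) as [L [HL Hfg]].
  exists L; split; [exact HL|]; intros s t s' t'.
  replace (f s' t' - g s' t' - (f s t - g s t))
    with (f s' t' + -1 * g s' t' - (f s t + -1 * g s t)) by ring.
  apply Hfg.
Qed.

Lemma lipschitz2_max f g :
  lipschitz2 f -> lipschitz2 g -> lipschitz2 (fun s t => Rmax (f s t) (g s t)).
Proof.
  intros [L1 [HL1 Hf]] [L2 [HL2 Hg]]; exists (L1 + L2); split; [lra|]; intros s t s' t'.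
  specialize (Hf s t s' t'); specialize (Hg s t s' t').
  eapply Rle_trans; [apply Rmax_lipschitz|]; nra.
Qed.

Lemma lipschitz2_min f g :
  lipschitz2 f -> lipschitz2 g -> lipschitz2 (fun s t => Rmin (f s t) (g s t)).
Proof.
  intros [L1 [HL1 Hf]] [L2 [HL2 Hg]]; exists (L1 + L2); split; [lra|]; intros s t s' t'.
  specialize (Hf s t s' t'); specialize (Hg s t s' t').
  eapply Rle_trans; [apply Rmin_lipschitz|]; nra.
Qed.

Lemma lipschitz2_small f s t e : lipschitz2 f -> e > 0 ->
  exists d, d > 0 /\ forall s' t', Rabs (s' - s) < d -> Rabs (t' - t) < d ->
    Rabs (f s' t' - f s t) < e.
Proof.
  intros [L [HL Hf]] He; exists (e / (2 * L)); split; [apply Rdiv_lt_0_compat; lra|].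
  intros s' t' Hs Ht; specialize (Hf s t s' t').
  assert (E : 2 * L * (e / (2 * L)) = e) by (field; lra); nra.
Qed.

Definition clamp01 (r : R) : R := Rmax 0 (Rmin 1 r).

Lemma clamp01_in r : in01 (clamp01 r).
Proof. unfold clamp01, in01, Rmax, Rmin; destruct_Rle_dec; lra. Qed.

Lemma clamp01_id r : in01 r -> clamp01 r = r.
Proof. unfold clamp01, in01, Rmax, Rmin; intros; destruct_Rle_dec; lra. Qed.

Lemma clamp01_eq r u : in01 u -> r = u -> clamp01 r = u.
Proof. intros Hu ->; exact (clamp01_id u Hu). Qed.

Lemma lipschitz2_clamp01 f : lipschitz2 f -> lipschitz2 (fun s t => clamp01 (f s t)).
Proof.
  intros; unfold clamp01; apply lipschitz2_max; [apply lipschitz2_const|].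
  apply lipschitz2_min; [apply lipschitz2_const|assumption].
Qed.

Ltac solve_lipschitz2 := repeat first
  [ apply lipschitz2_clamp01 | apply lipschitz2_max | apply lipschitz2_min
  | apply lipschitz2_fst | apply lipschitz2_snd | apply lipschitz2_minus
  | apply lipschitz2_plus | apply lipschitz2_scal | apply lipschitz2_const ].

Definition into01 (f : R -> R -> R) : Prop :=
  forall s t, in01 s -> in01 t -> in01 (f s t).

Lemma into01_clamp01 f : into01 (fun s t => clamp01 (f s t)).
Proof. intros s t _ _; apply clamp01_in. Qed.

Definition continuous_I2 {X : TopSpace} (F : R -> R -> X) : Prop :=
  forall s t, in01 s -> in01 t -> forall V : X -> Prop, is_open X V -> V (F s t) ->
    exists d, d > 0 /\ forall s' t', in01 s' -> in01 t' ->
      Rabs (s' - s) < d -> Rabs (t' - t) < d -> V (F s' t').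

Lemma continuous_I2_reparam {X : TopSpace} (F : R -> R -> X) a b :
  continuous_I2 F -> lipschitz2 a -> lipschitz2 b -> into01 a -> into01 b ->
  continuous_I2 (fun s t => F (a s t) (b s t)).
Proof.
  intros HF La Lb Ia Ib s t Hs Ht V HV HVst.
  destruct (HF _ _ (Ia s t Hs Ht) (Ib s t Hs Ht) V HV HVst) as [d [Hd HFd]].
  destruct (lipschitz2_small a s t d La Hd) as [da [Hda Ha]].
  destruct (lipschitz2_small b s t d Lb Hd) as [db [Hdb Hb]].
  exists (Rmin da db); split; [apply Rmin_pos; lra|].
  intros s' t' Hs' Ht' Hss Htt; pose proof (Rmin_l da db); pose proof (Rmin_r da db).
  apply HFd; auto; [apply Ha | apply Hb]; lra.
Qed.

Lemma continuous_I2_path {X : TopSpace} (p : R -> X) b :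
  path_continuous p -> lipschitz2 b -> into01 b -> continuous_I2 (fun s t => p (b s t)).
Proof.
  intros Hp Lb Ib s t Hs Ht V HV HVst.
  destruct (Hp _ (Ib s t Hs Ht) V HV HVst) as [d [Hd Hpd]].
  destruct (lipschitz2_small b s t d Lb Hd) as [db [Hdb Hb]].
  exists db; split; [lra|]; intros s' t' Hs' Ht' Hss Htt.
  apply Hpd; [apply Ib; auto | apply Hb; auto].
Qed.

Lemma continuous_I2_homotopy {X Z : TopSpace} (H : X -> R -> Z) P v :
  cont_X01 H -> continuous_I2 P -> lipschitz2 v -> into01 v ->
  continuous_I2 (fun s t => H (P s t) (v s t)).
Proof.
  intros HH HP Lv Iv s t Hs Ht V HV HVst.
  destruct (HH (P s t) (v s t) (Iv s t Hs Ht) V HV HVst)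
    as [U [HU [HUz [dv [Hdv HHd]]]]].
  destruct (HP s t Hs Ht U HU HUz) as [dP [HdP HPd]].
  destruct (lipschitz2_small v s t dv Lv Hdv) as [d [Hd Hv]].
  exists (Rmin dP d); split; [apply Rmin_pos; lra|].
  intros s' t' Hs' Ht' Hss Htt; pose proof (Rmin_l dP d); pose proof (Rmin_r dP d).
  apply HHd; [apply HPd; auto; lra | apply Iv; auto | apply Hv; lra].
Qed.

Lemma continuous_I2_comp {X Z : TopSpace} (g : X -> Z) P :
  continuous g -> continuous_I2 P -> continuous_I2 (fun s t => g (P s t)).
Proof. intros Hg HP s t Hs Ht V HV; apply (HP s t Hs Ht (fun z => V (g z))); auto. Qed.

Lemma continuous_I2_swap {X : TopSpace} (F : R -> R -> X) :
  continuous_I2 F -> continuous_I2 (fun s t => F t s).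
Proof.
  intros HF s t Hs Ht V HV HVst.
  destruct (HF t s Ht Hs V HV HVst) as [d [Hd HFd]]; exists d; auto.
Qed.

Lemma continuous_I2_glue_s {X : TopSpace} c (A B : R -> R -> X) :
  continuous_I2 A -> continuous_I2 B -> (forall t, in01 t -> A c t = B c t) ->
  continuous_I2 (fun s t => if Rle_dec s c then A s t else B s t).
Proof.
  intros HA HB Hc s t Hs Ht V HV HVst.
  destruct (Rtotal_order s c) as [Hsc | [<- | Hsc]].
  - destruct (Rle_dec s c) as [_|]; [|lra].
    destruct (HA s t Hs Ht V HV HVst) as [d [Hd HAd]].
    exists (Rmin d (c - s)); split; [apply Rmin_pos; lra|].
    intros s' t' Hs' Ht' Hss Htt; pose proof (Rmin_l d (c - s)); pose proof (Rmin_r d (c - s)).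
    pose proof (Rabs_def2 _ _ Hss); destruct (Rle_dec s' c); [apply HAd; auto; lra | lra].
  - destruct (Rle_dec s s) as [_|]; [|lra].
    assert (HVB : V (B s t)) by (rewrite <- Hc; auto).
    destruct (HA s t Hs Ht V HV HVst) as [dA [HdA HAd]].
    destruct (HB s t Hs Ht V HV HVB) as [dB [HdB HBd]].
    exists (Rmin dA dB); split; [apply Rmin_pos; lra|].
    intros s' t' Hs' Ht' Hss Htt; pose proof (Rmin_l dA dB); pose proof (Rmin_r dA dB).
    destruct (Rle_dec s' s); [apply HAd | apply HBd]; auto; lra.
  - destruct (Rle_dec s c) as [|_]; [lra|].
    destruct (HB s t Hs Ht V HV HVst) as [d [Hd HBd]].
    exists (Rmin d (s - c)); split; [apply Rmin_pos; lra|].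
    intros s' t' Hs' Ht' Hss Htt; pose proof (Rmin_l d (s - c)); pose proof (Rmin_r d (s - c)).
    pose proof (Rabs_def2 _ _ Hss); destruct (Rle_dec s' c); [lra | apply HBd; auto; lra].
Qed.

Lemma continuous_I2_glue_t {X : TopSpace} c (A B : R -> R -> X) :
  continuous_I2 A -> continuous_I2 B -> (forall s, in01 s -> A s c = B s c) ->
  continuous_I2 (fun s t => if Rle_dec t c then A s t else B s t).
Proof.
  intros HA HB Hc.
  apply (continuous_I2_swap (fun s t => if Rle_dec s c then A t s else B t s)).
  apply continuous_I2_glue_s; auto;
    [apply (continuous_I2_swap A) | apply (continuous_I2_swap B)]; auto.
Qed.

Lemma cont_X01_path {X Z : TopSpace} (H : X -> R -> Z) z :
  cont_X01 H -> path_continuous (H z).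
Proof.
  intros HH t Ht V HV HVt.
  destruct (HH z t Ht V HV HVt) as [U [_ [HUz [d [Hd HHd]]]]]; exists d; auto.
Qed.

Lemma loop_homotopic_sym {X : TopSpace} (x : X) p q :
  loop_homotopic x p q -> loop_homotopic x q p.
Proof.
  intros [K [HK [K0 [K1 Kx]]]].
  exists (fun s t => K (1 - s) t); split; [|split; [|split]].
  - apply (continuous_I2_reparam K (fun s _ => 1 - s) (fun _ t => t)); auto.
    + solve_lipschitz2.
    + apply lipschitz2_snd.
    + intros s t Hs _; unfold in01 in *; lra.
    + intros s t _ Ht; exact Ht.
  - intros t Ht; rewrite Rminus_0_r; auto.
  - intros t Ht; rewrite Rminus_diag; auto.
  - intros s Hs; apply Kx; unfold in01 in *; lra.
Qed.

Lemma loop_homotopic_trans {X : TopSpace} (x : X) p q r :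
  loop_homotopic x p q -> loop_homotopic x q r -> loop_homotopic x p r.
Proof.
  intros [K1 [HK1 [K10 [K11 K1x]]]] [K2 [HK2 [K20 [K21 K2x]]]].
  exists (fun s t => if Rle_dec s (/2) then K1 (clamp01 (2 * s)) t
                     else K2 (clamp01 (2 * s - 1)) t).
  split; [|split; [|split]].
  - apply continuous_I2_glue_s.
    + apply (continuous_I2_reparam K1 (fun s _ => clamp01 (2 * s)) (fun _ t => t)); auto;
        [solve_lipschitz2 | apply lipschitz2_snd | apply into01_clamp01
        | intros s t _ Ht; exact Ht].
    + apply (continuous_I2_reparam K2 (fun s _ => clamp01 (2 * s - 1)) (fun _ t => t)); auto;
        [solve_lipschitz2 | apply lipschitz2_snd | apply into01_clamp01
        | intros s t _ Ht; exact Ht].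
    + intros t Ht.
      rewrite (clamp01_eq (2 * /2) 1), (clamp01_eq (2 * /2 - 1) 0) by (unfold in01; lra).
      rewrite K11, K20; auto.
  - intros t Ht; destruct (Rle_dec 0 (/2)); [|lra].
    rewrite (clamp01_eq (2 * 0) 0) by (unfold in01; lra); auto.
  - intros t Ht; destruct (Rle_dec 1 (/2)); [lra|].
    rewrite (clamp01_eq (2 * 1 - 1) 1) by (unfold in01; lra); auto.
  - intros s Hs; destruct (Rle_dec s (/2)); [apply K1x | apply K2x]; apply clamp01_in.
Qed.

Lemma loop_homotopic_map {X Z : TopSpace} (g : X -> Z) (x : X) p q :
  continuous g -> loop_homotopic x p q ->
  loop_homotopic (g x) (fun t => g (p t)) (fun t => g (q t)).
Proof.
  intros Hg [K [HK [K0 [K1 Kx]]]].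
  exists (fun s t => g (K s t)); split; [|split; [|split]].
  - apply continuous_I2_comp; auto.
  - intros t Ht; rewrite K0; auto.
  - intros t Ht; rewrite K1; auto.
  - intros s Hs; destruct (Kx s Hs) as [-> ->]; auto.
Qed.

(* For a path gamma and a loop r at gamma 0, the loop gamma^-1 r gamma at gamma 1.  The
   clamps make every branch a map defined on the whole square, as the gluing lemmas need. *)
Definition conj_loop {X : TopSpace} (gamma r : R -> X) (t : R) : X :=
  if Rle_dec t (/3) then gamma (clamp01 (1 - 3 * t))
  else if Rle_dec t (2/3) then r (clamp01 (3 * t - 1))
  else gamma (clamp01 (3 * t - 2)).

Lemma loop_homotopic_conj {X : TopSpace} (gamma : R -> X) (z w : X) p q :
  path_continuous gamma -> gamma 0 = z -> gamma 1 = w ->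
  loop_homotopic z p q -> loop_homotopic w (conj_loop gamma p) (conj_loop gamma q).
Proof.
  intros Hgamma g0 g1 [K [HK [K0 [K1 Kz]]]].
  assert (Hends : forall r : R -> X, conj_loop gamma r 0 = w /\ conj_loop gamma r 1 = w).
  { intros r; unfold conj_loop.
    destruct (Rle_dec 0 (/3)); [|lra]; destruct (Rle_dec 1 (/3)); [lra|];
      destruct (Rle_dec 1 (2/3)); [lra|].
    rewrite (clamp01_eq (1 - 3 * 0) 1), (clamp01_eq (3 * 1 - 2) 1) by (unfold in01; lra).
    auto. }
  exists (fun s => conj_loop gamma (K s)); split; [|split; [|split]].
  - unfold conj_loop.
    apply (continuous_I2_glue_t (/3) (fun _ t => gamma (clamp01 (1 - 3 * t)))
      (fun s t => if Rle_dec t (2/3) then K s (clamp01 (3 * t - 1))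
                  else gamma (clamp01 (3 * t - 2)))).
    + apply continuous_I2_path; [auto | solve_lipschitz2 | apply into01_clamp01].
    + apply continuous_I2_glue_t.
      * apply (continuous_I2_reparam K (fun s _ => s) (fun _ t => clamp01 (3 * t - 1)));
          [auto | apply lipschitz2_fst | solve_lipschitz2 | intros s t Hs _; exact Hs
          | apply into01_clamp01].
      * apply continuous_I2_path; [auto | solve_lipschitz2 | apply into01_clamp01].
      * intros s Hs.
        rewrite (clamp01_eq (3 * (2/3) - 1) 1), (clamp01_eq (3 * (2/3) - 2) 0)
          by (unfold in01; lra).
        rewrite g0; apply Kz; auto.
    + intros s Hs; destruct (Rle_dec (/3) (2/3)); [|lra].
      rewrite (clamp01_eq (1 - 3 * /3) 0), (clamp01_eq (3 * /3 - 1) 0) by (unfold in01; lra).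
      rewrite g0; symmetry; apply Kz; auto.
  - intros t Ht; unfold conj_loop.
    destruct (Rle_dec t (/3)); [reflexivity|].
    destruct (Rle_dec t (2/3)); [apply K0, clamp01_in | reflexivity].
  - intros t Ht; unfold conj_loop.
    destruct (Rle_dec t (/3)); [reflexivity|].
    destruct (Rle_dec t (2/3)); [apply K1, clamp01_in | reflexivity].
  - intros s _; apply Hends.
Qed.

(* As [l] goes from 0 to 1, [sq_param l] squeezes the parameter of a loop into the middle
   third, while [sq_time l] runs the homotopy time down to 0 there and along the track of
   the base point on the outer thirds. *)
Definition sq_param (l t : R) : R :=
  clamp01 (Rmax (t - /3 * l) (Rmin (3 * t - 1) (t + /3 * l))).
Definition sq_time (l t : R) : R := Rmax (1 - l) (Rmax (1 - 3 * t) (3 * t - 2)).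

Ltac solve_squeeze :=
  unfold sq_param, sq_time, clamp01, Rmax, Rmin, in01 in *; intros; destruct_Rle_dec; lra.

Lemma sq_param_0 t : in01 t -> sq_param 0 t = t. Proof. solve_squeeze. Qed.
Lemma sq_time_0 t : in01 t -> sq_time 0 t = 1. Proof. solve_squeeze. Qed.
Lemma sq_param_l0 l : in01 l -> sq_param l 0 = 0. Proof. solve_squeeze. Qed.
Lemma sq_param_l1 l : in01 l -> sq_param l 1 = 1. Proof. solve_squeeze. Qed.
Lemma sq_time_l0 l : in01 l -> sq_time l 0 = 1. Proof. solve_squeeze. Qed.
Lemma sq_time_l1 l : in01 l -> sq_time l 1 = 1. Proof. solve_squeeze. Qed.
Lemma into01_sq_time : into01 sq_time. Proof. unfold into01; solve_squeeze. Qed.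

Lemma squeeze_1_left t :
  0 <= t <= /3 -> sq_param 1 t = 0 /\ sq_time 1 t = clamp01 (1 - 3 * t).
Proof. split; solve_squeeze. Qed.
Lemma squeeze_1_mid t :
  /3 <= t <= 2/3 -> sq_param 1 t = clamp01 (3 * t - 1) /\ sq_time 1 t = 0.
Proof. split; solve_squeeze. Qed.
Lemma squeeze_1_right t :
  2/3 <= t <= 1 -> sq_param 1 t = 1 /\ sq_time 1 t = clamp01 (3 * t - 2).
Proof. split; solve_squeeze. Qed.

Lemma loop_homotopic_conj_track {X : TopSpace} (H : X -> R -> X) (f : X -> X) (x : X) p :
  cont_X01 H -> (forall z, H z 0 = f z) -> (forall z, H z 1 = z) -> is_loop x p ->
  loop_homotopic x p (conj_loop (H x) (fun t => f (p t))).
Proof.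
  intros HH H0 H1 [Hp [p0 p1]].
  exists (fun l t => H (p (sq_param l t)) (sq_time l t)); split; [|split; [|split]].
  - apply (continuous_I2_homotopy H (fun l t => p (sq_param l t))); auto.
    + apply continuous_I2_path; auto;
        [unfold sq_param; solve_lipschitz2 | apply into01_clamp01].
    + unfold sq_time; solve_lipschitz2.
    + exact into01_sq_time.
  - intros t Ht; rewrite sq_param_0, sq_time_0; auto.
  - intros t [Ht0 Ht1]; unfold conj_loop.
    destruct (Rle_dec t (/3)).
    + destruct (squeeze_1_left t) as [-> ->]; [lra|]; rewrite p0; reflexivity.
    + destruct (Rle_dec t (2/3)).
      * destruct (squeeze_1_mid t) as [-> ->]; [lra|]; apply H0.
      * destruct (squeeze_1_right t) as [-> ->]; [lra|]; rewrite p1; reflexivity.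
  - intros l Hl; rewrite sq_param_l0, sq_time_l0, sq_param_l1, sq_time_l1, H1, H1; auto.
Qed.

Lemma gapLen_pos m : 0 < gapLen m.
Proof. unfold gapLen; apply Rinv_0_lt_compat, pow_lt; lra. Qed.

Lemma gapLen_S m : gapLen (S m) = gapLen m / 3.
Proof. unfold gapLen; simpl; pose proof (pow_lt 3 m ltac:(lra)); field; lra. Qed.

Lemma gap_in01 m j : 0 <= gapL m j /\ gapL m j + gapLen m <= 1.
Proof.
  revert j; induction m as [|m IHm]; intros j.
  - unfold gapLen; simpl; lra.
  - rewrite gapLen_S; simpl; destruct (Nat.ltb j (2 ^ m));
      [destruct (IHm j) | destruct (IHm (j - 2 ^ m)%nat)]; lra.
Qed.

Lemma in_cantor_0 : in_cantor 0.
Proof. split; [unfold in01; lra|]; intros m j _ Hgap; destruct (gap_in01 m j); lra. Qed.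

Lemma in_cantor_1 : in_cantor 1.
Proof. split; [unfold in01; lra|]; intros m j _ Hgap; destruct (gap_in01 m j); lra. Qed.

Lemma not_in_cantor_gap t : in01 t -> ~ in_cantor t ->
  exists m j, (j < 2 ^ m)%nat /\ gapL m j < t < gapL m j + gapLen m.
Proof.
  intros Ht Hnc; apply NNPP; intros Hno; apply Hnc; split; [exact Ht|].
  intros m j Hj Hgap; apply Hno; eauto.
Qed.

Lemma affine_in01 a L s : 0 < L -> a <= s <= a + L -> in01 ((s - a) / L).
Proof.
  intros HL Hs; assert (E : (s - a) / L * L = s - a) by (field; lra).
  unfold in01; split; nra.
Qed.

Lemma path_affine_continuous {X : TopSpace} (r : R -> X) a L s0 (V : X -> Prop) :
  path_continuous r -> 0 < L -> a <= s0 <= a + L -> is_open X V -> V (r ((s0 - a) / L)) ->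
  exists d, d > 0 /\ forall s, a <= s <= a + L -> Rabs (s - s0) < d -> V (r ((s - a) / L)).
Proof.
  intros Hr HL Hs0 HV HVs0.
  destruct (Hr _ (affine_in01 a L s0 HL Hs0) V HV HVs0) as [d [Hd Hrd]].
  exists (d * L); split; [nra|]; intros s Hs Hss0.
  apply Hrd; [apply affine_in01; auto|].
  replace ((s - a) / L - (s0 - a) / L) with ((s - s0) / L) by (field; lra).
  unfold Rdiv; rewrite Rabs_mult, Rabs_inv, (Rabs_right L) by lra.
  apply (Rmult_lt_reg_r L); auto; rewrite Rmult_assoc, Rinv_l; lra.
Qed.

Lemma uniform_delta_lt (Q : nat -> R -> Prop) n :
  (forall i d d', 0 < d' <= d -> Q i d -> Q i d') ->
  (forall i, (i < n)%nat -> exists d, d > 0 /\ Q i d) ->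
  exists d, d > 0 /\ forall i, (i < n)%nat -> Q i d.
Proof.
  intros Hmono; induction n as [|n IHn]; intros Hex.
  - exists 1; split; [lra | intros; lia].
  - destruct IHn as [d1 [Hd1 HQ1]]; [intros i Hi; apply Hex; lia|].
    destruct (Hex n) as [d2 [Hd2 HQ2]]; [lia|].
    exists (Rmin d1 d2); split; [apply Rmin_pos; lra|].
    pose proof (Rmin_l d1 d2); pose proof (Rmin_r d1 d2); pose proof (Rmin_pos d1 d2 Hd1 Hd2).
    intros i Hi; destruct (Nat.eq_dec i n) as [->|Hin].
    + apply (Hmono n d2); [lra | exact HQ2].
    + apply (Hmono i d1); [lra | apply HQ1; lia].
Qed.

Section TauProduct.

Variables (X : TopSpace) (x : X) (alpha : nat -> R -> X) (p : R -> X).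
Hypothesis alpha_null : null_sequence x alpha.
Hypothesis p_tau : tau_product x alpha p.

Lemma tau_product_near_gap t (V : X -> Prop) m j : (j < 2 ^ m)%nat -> is_open X V -> V (p t) ->
  exists d, d > 0 /\ forall s, Rabs (s - t) < d ->
    gapL m j <= s <= gapL m j + gapLen m -> V (p s).
Proof.
  intros Hj HV Hpt; destruct p_tau as [_ Hgap]; pose proof (gapLen_pos m).
  destruct (Rlt_dec t (gapL m j)).
  { exists (gapL m j - t); split; [lra|]; intros s Hs Hgs.
    apply Rabs_def2 in Hs; lra. }
  destruct (Rlt_dec (gapL m j + gapLen m) t).
  { exists (t - (gapL m j + gapLen m)); split; [lra|]; intros s Hs Hgs.
    apply Rabs_def2 in Hs; lra. }
  rewrite (Hgap m j t Hj) in Hpt by lra.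
  destruct (path_affine_continuous (alpha (2 ^ m + j - 1)) (gapL m j) (gapLen m) t V
    (proj1 (proj1 alpha_null _)) (gapLen_pos m) ltac:(lra) HV Hpt) as [d [Hd Hd']].
  exists d; split; [exact Hd|]; intros s Hs Hgs.
  rewrite (Hgap m j s Hj Hgs); auto.
Qed.

Lemma tau_product_continuous_in_gap t m j : (j < 2 ^ m)%nat ->
  gapL m j < t < gapL m j + gapLen m ->
  forall V : X -> Prop, is_open X V -> V (p t) ->
  exists d, d > 0 /\ forall s, Rabs (s - t) < d -> V (p s).
Proof.
  intros Hj Ht V HV Hpt.
  destruct (tau_product_near_gap t V m j Hj HV Hpt) as [d [Hd Hd']].
  exists (Rmin d (Rmin (t - gapL m j) (gapL m j + gapLen m - t))).
  split; [repeat apply Rmin_pos; lra|]; intros s Hs.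
  pose proof (Rmin_l d (Rmin (t - gapL m j) (gapL m j + gapLen m - t)));
  pose proof (Rmin_r d (Rmin (t - gapL m j) (gapL m j + gapLen m - t)));
  pose proof (Rmin_l (t - gapL m j) (gapL m j + gapLen m - t));
  pose proof (Rmin_r (t - gapL m j) (gapL m j + gapLen m - t)).
  pose proof (Rabs_def2 _ _ Hs); apply Hd'; lra.
Qed.

Lemma tau_product_continuous_at_cantor t : in_cantor t ->
  forall V : X -> Prop, is_open X V -> V (p t) ->
  exists d, d > 0 /\ forall s, in01 s -> Rabs (s - t) < d -> V (p s).
Proof.
  intros Ht V HV Hpt; destruct p_tau as [Hcantor Hgap].
  assert (Hx : V x) by (rewrite <- (Hcantor t Ht); exact Hpt).
  destruct (proj2 alpha_null V HV Hx) as [N HN].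
  set (Q := fun m d => forall j, (j < 2 ^ m)%nat -> forall s, Rabs (s - t) < d ->
              gapL m j <= s <= gapL m j + gapLen m -> V (p s)).
  destruct (uniform_delta_lt Q N) as [d [Hd HQ]].
  { intros m d d' Hd' HQm j Hj s Hs; apply HQm; auto; lra. }
  { intros m _; apply (uniform_delta_lt (fun j d => forall s, Rabs (s - t) < d ->
      gapL m j <= s <= gapL m j + gapLen m -> V (p s))).
    - intros j d d' Hd' Hj s Hs; apply Hj; lra.
    - intros j Hj; apply tau_product_near_gap; auto. }
  exists d; split; [exact Hd|]; intros s Hs Hst.
  destruct (classic (in_cantor s)) as [Hsc|Hsc]; [rewrite (Hcantor s Hsc); exact Hx|].
  destruct (not_in_cantor_gap s Hs Hsc) as [m [j [Hj Hsgap]]].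
  destruct (Nat.lt_ge_cases m N) as [HmN|HmN]; [apply (HQ m HmN j Hj s Hst); lra|].
  (* gaps of level m >= N carry loops of index at least N *)
  rewrite (Hgap m j s Hj) by lra; apply HN.
  - pose proof (Nat.pow_gt_lin_r 2 m ltac:(lia)); lia.
  - apply affine_in01; [apply gapLen_pos | lra].
Qed.

Lemma tau_product_is_loop : is_loop x p.
Proof.
  destruct p_tau as [Hcantor _].
  split; [|split; apply Hcantor; [exact in_cantor_0 | exact in_cantor_1]].
  intros t Ht V HV Hpt.
  destruct (classic (in_cantor t)) as [Htc|Htc];
    [apply tau_product_continuous_at_cantor; auto|].
  destruct (not_in_cantor_gap t Ht Htc) as [m [j [Hj Htgap]]].
  destruct (tau_product_continuous_in_gap t m j Hj Htgap V HV Hpt) as [d [Hd Hd']].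
  exists d; auto.
Qed.

End TauProduct.

Lemma bijection_eventually_ge phi : bijection phi ->
  forall N, exists N', forall n, (N' <= n)%nat -> (N <= phi n)%nat.
Proof.
  intros [Hinj Hsurj]; induction N as [|N [N' HN']]; [exists 0%nat; intros; lia|].
  destruct (Hsurj N) as [a Ha]; exists (Nat.max N' (S a)); intros n Hn.
  assert (HNn : (N <= phi n)%nat) by (apply HN'; lia).
  destruct (Nat.eq_dec (phi n) N) as [Heq|]; [|lia].
  rewrite <- Ha in Heq; apply Hinj in Heq; lia.
Qed.

Lemma null_sequence_perm {X : TopSpace} (x : X) alpha phi :
  null_sequence x alpha -> bijection phi -> null_sequence x (fun n => alpha (phi n)).
Proof.
  intros [Hloops Hnull] Hphi; split; [intros n; apply Hloops|].
  intros U HU HUx; destruct (Hnull U HU HUx) as [N HN].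
  destruct (bijection_eventually_ge phi Hphi N) as [N' HN'].
  exists N'; intros n Hn; apply HN, HN', Hn.
Qed.

Lemma null_sequence_map {X Y : TopSpace} (k : X -> Y) (x : X) alpha :
  continuous k -> null_sequence x alpha -> null_sequence (k x) (fun n t => k (alpha n t)).
Proof.
  intros Hk [Hloops Hnull]; split.
  - intros n; destruct (Hloops n) as [Hn [H0 H1]]; split; [|rewrite H0, H1; auto].
    intros t Ht V HV; apply (Hn t Ht (fun z => V (k z))); auto.
  - intros U HU; apply (Hnull (fun z => U (k z))); auto.
Qed.

Lemma tau_product_map {X Y : TopSpace} (k : X -> Y) (x : X) alpha p :
  tau_product x alpha p -> tau_product (k x) (fun n t => k (alpha n t)) (fun t => k (p t)).
Proof.
  intros [Hcantor Hgap]; split.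
  - intros t Ht; rewrite Hcantor; auto.
  - intros m j t Hj Ht; rewrite (Hgap m j t Hj Ht); auto.
Qed.

Lemma transfinitely_commutative_homotopy_equivalence (X Y : TopSpace) (k : X -> Y) (x : X) :
  homotopy_equivalence k -> transfinitely_commutative Y (k x) ->
  transfinitely_commutative X x.
Proof.
  intros [Hk [g [Hg [[H [HH [H0 H1]]] _]]]] HY alpha Halpha phi Hphi p q Hp Hq.
  assert (Hkpq : loop_homotopic (k x) (fun t => k (p t)) (fun t => k (q t))).
  { exact (HY _ (null_sequence_map k x alpha Hk Halpha) phi Hphi _ _
             (tau_product_map k x _ _ Hp) (tau_product_map k x _ _ Hq)). }
  assert (Hconj : loop_homotopic x (conj_loop (H x) (fun t => g (k (p t))))
                                   (conj_loop (H x) (fun t => g (k (q t))))).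
  { apply (loop_homotopic_conj (H x) (g (k x))); auto using cont_X01_path.
    exact (loop_homotopic_map g _ _ _ Hg Hkpq). }
  apply (loop_homotopic_trans _ _ _ _
    (loop_homotopic_conj_track H (fun z => g (k z)) x p HH H0 H1
      (tau_product_is_loop X x alpha p Halpha Hp))).
  apply (loop_homotopic_trans _ _ _ _ Hconj), loop_homotopic_sym.
  exact (loop_homotopic_conj_track H (fun z => g (k z)) x q HH H0 H1
    (tau_product_is_loop X x _ q (null_sequence_perm x alpha phi Halpha Hphi) Hq)).
Qed.

Lemma based_homotopic_homotopic {X Y : TopSpace} (x : X) (f g : X -> Y) :
  based_homotopic x f g -> homotopic f g.
Proof. intros [H [HH [H0 [H1 _]]]]; exists H; auto. Qed.

Lemma based_homotopy_equivalence_homotopy_equivalence {X Y : TopSpace} (f : X -> Y) x y :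
  based_homotopy_equivalence f x y -> homotopy_equivalence f.
Proof.
  intros [Hf [_ [g [Hg [_ [Hgf Hfg]]]]]].
  split; [exact Hf|]; exists g; split; [exact Hg|].
  split; eapply based_homotopic_homotopic; eauto.
Qed.

Lemma based_homotopy_equivalence_sym {X Y : TopSpace} (f : X -> Y) x y :
  based_homotopy_equivalence f x y -> exists g, based_homotopy_equivalence g y x.
Proof.
  intros [Hf [Hfx [g [Hg [Hgy [Hgf Hfg]]]]]].
  exists g; repeat split; auto; exists f; auto.
Qed.

Theorem mainTheorem5 :
  (forall (X Y : TopSpace) (k : X -> Y) (x : X),
      homotopy_equivalence k ->
      transfinitely_commutative Y (k x) ->
      transfinitely_commutative X x) /\
  (forall (X Y : TopSpace) (f : X -> Y) (x : X) (y : Y),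
      based_homotopy_equivalence f x y ->
      (transfinitely_commutative X x <-> transfinitely_commutative Y y)).
Proof.
  split; [exact transfinitely_commutative_homotopy_equivalence|].
  intros X Y f x y Hf.
  destruct (based_homotopy_equivalence_sym f x y Hf) as [g Hg].
  split; intros HT.
  - apply (transfinitely_commutative_homotopy_equivalence Y X g y);
      [eapply based_homotopy_equivalence_homotopy_equivalence; eauto|].
    destruct Hg as [_ [-> _]]; exact HT.
  - apply (transfinitely_commutative_homotopy_equivalence X Y f x);
      [eapply based_homotopy_equivalence_homotopy_equivalence; eauto|].
    destruct Hf as [_ [-> _]]; exact HT.
Qed.
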